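(* Let $A_1=\begin{pmatrix}1&1&2\\1&0&1\\2&1&0\end{pmatrix}$, $a=\begin{pmatrix}2\\2\\1\end{pmatrix}$, let $k\ge1$, let $v\in\mathbb R^k$ be entrywise nonnegative with $v^Tv=1$, and define $$A(v)=\begin{pmatrix}A_1&av^T\\ va^T& vv^T\end{pmatrix}\in\mathbb R^{(k+3)\times(k+3)}.$$ Then $\operatorname{rk}(A(v))=\operatorname{rk}_+(A(v))=3$ and $\operatorname{st}_+(A(v))=4$.
   Context: The SNT-rank $\operatorname{st}_+(A)$ of a symmetric entrywise nonnegative $n\times n$ matrix $A$ is the minimal $k$ such that $A=BCB^T$ with $B$ an entrywise nonnegative $n\times k$ matrix and $C$ a symmetric entrywise nonnegative $k\times k$ matrix. $\operatorname{rk}_+(A)$ is the minimal $k$ such that $A=UV^T$ with $U,V$ entrywise nonnegative $n\times k$ matrices. *)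

From HB Require Import structures.
From mathcomp Require Import all_boot all_order all_algebra.
From mathcomp Require Import reals.
Set Implicit Arguments. Unset Strict Implicit. Unset Printing Implicit Defensive.
Import Order.TTheory GRing.Theory Num.Theory.
Local Open Scope ring_scope.

Definition nonneg_mx (R : realType) m n (M : 'M[R]_(m, n)) : Prop :=
  forall i j, 0 <= M i j.

Definition nn_fact (R : realType) n (A : 'M[R]_n) (k : nat) : Prop :=
  exists (U V : 'M[R]_(n, k)), [/\ nonneg_mx U, nonneg_mx V & A = U *m V^T].

Definition snt_fact (R : realType) n (A : 'M[R]_n) (k : nat) : Prop :=
  exists (B : 'M[R]_(n, k)) (C : 'M[R]_k),
    [/\ nonneg_mx B, nonneg_mx C, C^T = C & A = B *m C *m B^T].

Definition rk_plus_is (R : realType) n (A : 'M[R]_n) (r : nat) : Prop :=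
  nn_fact A r /\ forall k, nn_fact A k -> (r <= k)%N.

Definition st_plus_is (R : realType) n (A : 'M[R]_n) (r : nat) : Prop :=
  snt_fact A r /\ forall k, snt_fact A k -> (r <= k)%N.

Definition A1 (R : realType) : 'M[R]_3 :=
  \matrix_(i < 3, j < 3)
    (nth [::] [:: [:: 1; 1; 2]; [:: 1; 0; 1]; [:: 2; 1; 0]] i)`_j.

Definition avec (R : realType) : 'cV[R]_3 := \col_(i < 3) [:: 2; 2; 1]`_i.

Definition Av (R : realType) k (v : 'cV[R]_k) : 'M[R]_(3 + k) :=
  block_mx (A1 R) (avec R *m v^T) (v *m (avec R)^T) (v *m v^T).

From HB Require Import structures.
From mathcomp Require Import all_boot all_order all_algebra.
From mathcomp Require Import reals.
From mathcomp Require Import ring lra.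
Import Order.TTheory GRing.Theory Num.Theory.
Local Open Scope ring_scope.
Set Implicit Arguments. Unset Strict Implicit. Unset Printing Implicit Defensive.

(* Write E = diag(I_3, v) and M4 = [[A1, a], [a^T, 1]], so that A(v) = E M4 E^T.
   Upper bounds: M4 = U4 W4^T for explicit nonnegative 4 x 3 matrices U4, W4,
   giving rk_+(A(v)) <= 3, and E M4 E^T is an SNT factorization of size 4.
   Lower bounds: a nonnegative or SNT factorization through k columns has rank
   at most k, and rank A(v) = 3 because the invertible A1 is a principal block.
   The core is that A(v) = B C B^T with B (k+3) x 3 is impossible:
   (i) the top block gives A1 = B1 C B1^T, so B1 and C are invertible; since
       a^T = (1,-1,1) A1, the bottom rows of B are forced to equal v (1,-1,1) B1,
       hence y <= x + z entrywise for the rows x, y, z of B1;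
   (ii) y and z are isotropic for the nonnegative form C with y C z = 1; in
       dimension 3, invertibility of C forces y to live on one index i with
       z_i = 0 and C_ii = 0, whence 1 = xCx >= 2 x_i (Cx)_i >= 2 y_i (Cx)_i
       = 2 xCy = 2, a contradiction. *)

Lemma ord3_third (i j : 'I_3) : exists l, (i != l) && (j != l).
Proof.
apply/existsP; apply: contraT; rewrite negb_exists => /forallP in_ij.
have : (#|[set: 'I_3]| <= #|[set i; j]|)%N.
  apply/subset_leq_card/subsetP => l _; rewrite !inE.
  by move: (in_ij l); rewrite negb_and !negbK => /orP[]/eqP->; rewrite eqxx ?orbT.
by rewrite cardsT card_ord cards2; case: (i != j).
Qed.

Lemma ord3_cover (i j l a : 'I_3) :
  i != j -> i != l -> j != l -> [|| a == i, a == j | a == l].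
Proof.
move=> hij hil hjl; apply: contraT; rewrite !negb_or => /and3P[hai haj hal].
have : (#|a |: (i |: [set j; l])| <= #|[set: 'I_3]|)%N.
  by apply/subset_leq_card/subsetP.
rewrite cardsT card_ord !cardsU1 cards1 !inE.
by rewrite (negbTE hai) (negbTE haj) (negbTE hal) (negbTE hij) (negbTE hil) (negbTE hjl).
Qed.

Lemma big_ord3_distinct (V : nmodType) (F : 'I_3 -> V) (i j l : 'I_3) :
  i != j -> i != l -> j != l -> \sum_a F a = F i + F j + F l.
Proof.
move=> hij hil hjl.
rewrite (bigD1 i) // (bigD1 j) 1?eq_sym //= (bigD1 l) /=; last first.
  by rewrite eq_sym hil eq_sym hjl.
rewrite big1 ?addr0 ?addrA // => a /andP[/andP[hai haj] hal].
by move: (ord3_cover a hij hil hjl); rewrite (negbTE hal) (negbTE haj) (negbTE hai).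
Qed.

Notation i0 := (@Ordinal 3 0 isT).
Notation i1 := (@Ordinal 3 1 isT).
Notation i2 := (@Ordinal 3 2 isT).

Lemma sum_ord3 (V : nmodType) (F : 'I_3 -> V) : \sum_a F a = F i0 + F i1 + F i2.
Proof. exact: big_ord3_distinct. Qed.

Definition qform (R : pzSemiRingType) n (C : 'M[R]_n) (x y : 'rV[R]_n) : R :=
  \sum_a \sum_b x 0 a * C a b * y 0 b.

Lemma mulmx_qform (R : pzSemiRingType) m1 m2 n (B : 'M[R]_(m1, n)) (C : 'M[R]_n)
    (B' : 'M[R]_(m2, n)) r s :
  (B *m C *m B'^T) r s = qform C (row r B) (row s B').
Proof.
rewrite mxE /qform exchange_big; apply: eq_bigr => b _.
by rewrite !mxE big_distrl; apply: eq_bigr => a _; rewrite !mxE.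
Qed.

Lemma qform_pos_term (R : realDomainType) n (C : 'M[R]_n) (x y : 'rV[R]_n) :
  0 < qform C x y -> exists a b, 0 < x 0 a * C a b * y 0 b.
Proof.
move=> q_gt0.
have /existsP[a /existsP[b pos]] : [exists a, exists b, 0 < x 0 a * C a b * y 0 b].
  apply: contraLR q_gt0; rewrite negb_exists -leNgt => /forallP no_pos.
  apply: sumr_le0 => a _; apply: sumr_le0 => b _.
  by move: (no_pos a); rewrite negb_exists => /forallP /(_ b); rewrite -leNgt.
by exists a, b.
Qed.

Section NonnegForm.
Variables (R : realType) (n : nat) (C : 'M[R]_n) (x y : 'rV[R]_n).
Hypotheses (nnC : nonneg_mx C) (nnx : nonneg_mx x) (nny : nonneg_mx y).

Let term_ge0 a b : 0 <= x 0 a * C a b * y 0 b.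
Proof. by rewrite !mulr_ge0. Qed.

Lemma qform_ge_term a b : x 0 a * C a b * y 0 b <= qform C x y.
Proof.
rewrite /qform (bigD1 a) //= (bigD1 b) //= -addrA lerDl addr_ge0 //.
  by rewrite sumr_ge0.
by rewrite sumr_ge0 // => a' _; rewrite sumr_ge0.
Qed.

Lemma qform_term_eq0 a b : qform C x y = 0 -> x 0 a * C a b * y 0 b = 0.
Proof. by move=> q0; apply: le_anti; rewrite term_ge0 -q0 qform_ge_term. Qed.

End NonnegForm.

Lemma qform_ord3 (R : comPzSemiRingType) (C : 'M[R]_3) (x y : 'rV[R]_3) (i j l : 'I_3) :
  i != j -> i != l -> j != l ->
  qform C x y =
      x 0 i * C i i * y 0 i + x 0 i * C i j * y 0 j + x 0 i * C i l * y 0 l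
    + x 0 j * C j i * y 0 i + x 0 j * C j j * y 0 j + x 0 j * C j l * y 0 l
    + x 0 l * C l i * y 0 i + x 0 l * C l j * y 0 j + x 0 l * C l l * y 0 l.
Proof.
by move=> hij hil hjl; rewrite /qform !(big_ord3_distinct _ hij hil hjl) !addrA.
Qed.

(* A 3 x 3 matrix whose principal block on {i, l} vanishes is singular: rows i
   and l are both multiples of the j-th unit row. *)
Lemma unit3_zero_block (R : comUnitRingType) (C : 'M[R]_3) (i j l : 'I_3) :
  i != j -> i != l -> j != l -> C i j != 0 ->
  C i i = 0 -> C i l = 0 -> C l i = 0 -> C l l = 0 -> C \notin unitmx.
Proof.
move=> hij hil hjl Cij_neq0 Cii Cil Cli Cll; apply/negP => C_unit.
pose e : 'rV[R]_3 := C l j *: delta_mx 0 i - C i j *: delta_mx 0 l.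
have eC : e *m C = 0.
  apply/rowP => b; rewrite mulmxBl -!scalemxAl -!rowE !mxE.
  by case/or3P: (ord3_cover b hij hil hjl) => /eqP->;
    rewrite ?Cii ?Cil ?Cli ?Cll; ring.
have : e = 0 by rewrite -(mulmxK C_unit e) eC mul0mx.
move/rowP/(_ l); rewrite !mxE !eqxx eq_sym (negbTE hil).
by rewrite mulr0 mulr1 sub0r => /eqP; rewrite oppr_eq0 (negbTE Cij_neq0).
Qed.

Lemma prod3_gt0 (R : realDomainType) (a b c : R) :
  0 <= a -> 0 <= b -> 0 <= c -> 0 < a * b * c -> [/\ 0 < a, 0 < b & 0 < c].
Proof.
move=> a_ge0 b_ge0 c_ge0.
rewrite lt_def !mulf_eq0 !negb_or => /andP[/andP[/andP[a0 b0] c0] _].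
by rewrite !lt_def a0 b0 c0 a_ge0 b_ge0 c_ge0.
Qed.

Section IsotropicPair.
Variables (R : realType) (C : 'M[R]_3) (y z : 'rV[R]_3).
Hypotheses (nnC : nonneg_mx C) (nny : nonneg_mx y) (nnz : nonneg_mx z).
Hypotheses (C_unit : C \in unitmx) (yy0 : qform C y y = 0) (zz0 : qform C z z = 0).
Hypothesis (yz_gt0 : 0 < qform C y z).

Lemma isotropic_pair_support :
  exists i j l : 'I_3, [/\ i != j, i != l & j != l] /\
    [/\ C i i = 0, z 0 i = 0, y 0 j = 0 & y 0 l = 0].
Proof.
have [i [j /prod3_gt0[// | | | yi_gt0 Cij_gt0 zj_gt0]]] := qform_pos_term yz_gt0 => //.
have [yi0 Cij0 zj0] := And3 (gt_eqF yi_gt0) (gt_eqF Cij_gt0) (gt_eqF zj_gt0).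
have y_term0 a b : y 0 a * C a b * y 0 b == 0 by rewrite (qform_term_eq0 nnC nny nny a b yy0).
have z_term0 a b : z 0 a * C a b * z 0 b == 0 by rewrite (qform_term_eq0 nnC nnz nnz a b zz0).
have Cii : C i i = 0.
  by apply/eqP; move: (y_term0 i i); rewrite !mulf_eq0 yi0 orbF.
have hij : i != j by apply: contraTneq Cij_gt0 => <-; rewrite Cii ltxx.
have [l /andP[hil hjl]] := ord3_third i j.
exists i, j, l; split=> //; split=> //.
- by apply/eqP; move: (z_term0 i j); rewrite !mulf_eq0 Cij0 zj0 !orbF.
- by apply/eqP; move: (y_term0 i j); rewrite !mulf_eq0 Cij0 yi0.
(* If y_l > 0, the block of C on {i, l} vanishes and C would be singular. *)
apply/eqP; apply: contraT => yl0.
have Cil : C i l = 0.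
  by apply/eqP; move: (y_term0 i l); rewrite !mulf_eq0 (negbTE yl0) yi0 orbF.
have Cli : C l i = 0.
  by apply/eqP; move: (y_term0 l i); rewrite !mulf_eq0 (negbTE yl0) yi0 orbF.
have Cll : C l l = 0.
  by apply/eqP; move: (y_term0 l l); rewrite !mulf_eq0 (negbTE yl0) orbF.
by move: C_unit; rewrite (negbTE (unit3_zero_block hij hil hjl (negbT Cij0) Cii Cil Cli Cll)).
Qed.

Variable x : 'rV[R]_3.
Hypotheses (nnx : nonneg_mx x) (C_sym : C^T = C).
Hypotheses (xx1 : qform C x x = 1) (xy1 : qform C x y = 1).
Hypothesis y_le_xz : forall a, y 0 a <= x 0 a + z 0 a.

(* With y supported on i and x_i >= y_i: 1 = xCx >= 2 x_i (Cx)_i >= 2 xCy = 2. *)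
Lemma isotropic_pair_infeasible : False.
Proof.
have [i [j [l [[hij hil hjl] [Cii zi yj yl]]]]] := isotropic_pair_support.
have symC a b : C a b = C b a by rewrite -[in LHS]C_sym mxE.
have yi_le_xi : y 0 i <= x 0 i by rewrite -[x 0 i]addr0 -zi y_le_xz.
pose S := C j i * x 0 j + C l i * x 0 l.
have S_ge0 : 0 <= S by rewrite addr_ge0 ?mulr_ge0.
have xy : qform C x y = y 0 i * S.
  by rewrite (qform_ord3 _ _ _ hij hil hjl) yj yl Cii /S; ring.
have xx : 2 * (x 0 i * S) <= qform C x x.
  rewrite (qform_ord3 _ _ _ hij hil hjl) Cii (symC i j) (symC i l) /S.
  have : 0 <= x 0 j * C j j * x 0 j + x 0 j * C j l * x 0 l
            + x 0 l * C l j * x 0 j + x 0 l * C l l * x 0 l.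
    by rewrite !addr_ge0 ?mulr_ge0.
  lra.
have xS_ge1 : 1 <= x 0 i * S by rewrite -xy1 xy ler_wpM2r.
by move: xx; rewrite xx1; lra.
Qed.

End IsotropicPair.

Section NonnegMatrices.
Variable R : realType.

Lemma nonneg_mulmx m n p (A : 'M[R]_(m, n)) (B : 'M[R]_(n, p)) :
  nonneg_mx A -> nonneg_mx B -> nonneg_mx (A *m B).
Proof. by move=> nnA nnB i j; rewrite mxE sumr_ge0 // => l _; rewrite mulr_ge0. Qed.

Lemma nonneg_block m1 m2 n1 n2 (A : 'M[R]_(m1, n1)) (B : 'M[R]_(m1, n2))
    (C : 'M[R]_(m2, n1)) (D : 'M[R]_(m2, n2)) :
  nonneg_mx A -> nonneg_mx B -> nonneg_mx C -> nonneg_mx D ->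
  nonneg_mx (block_mx A B C D).
Proof.
move=> nnA nnB nnC nnD i j; rewrite /block_mx mxE.
by case: split => a; rewrite mxE; case: split.
Qed.

Lemma nonneg_tr m n (A : 'M[R]_(m, n)) : nonneg_mx A -> nonneg_mx A^T.
Proof. by move=> nnA i j; rewrite mxE. Qed.

Lemma nonneg_id n : nonneg_mx (1%:M : 'M[R]_n).
Proof. by move=> i j; rewrite mxE ler0n. Qed.

Lemma nonneg_0 m n : nonneg_mx (0 : 'M[R]_(m, n)).
Proof. by move=> i j; rewrite mxE. Qed.

Lemma nonneg_usubmx m1 m2 n (A : 'M[R]_(m1 + m2, n)) :
  nonneg_mx A -> nonneg_mx (usubmx A).
Proof. by move=> nnA i j; rewrite mxE. Qed.

Lemma nonneg_dsubmx m1 m2 n (A : 'M[R]_(m1 + m2, n)) :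
  nonneg_mx A -> nonneg_mx (dsubmx A).
Proof. by move=> nnA i j; rewrite mxE. Qed.

Lemma unit_col_pos k (v : 'cV[R]_k) :
  nonneg_mx v -> v^T *m v = 1%:M -> exists j, 0 < v j 0.
Proof.
move=> nnv vv1; apply/existsP; apply: contraT; rewrite negb_exists => /forallP v0.
move/matrixP/(_ 0 0): vv1; rewrite !mxE big1 => [/eqP|j _]; first by rewrite eq_sym oner_eq0.
have : v j 0 = 0 by apply: le_anti; rewrite nnv andbT leNgt v0.
by rewrite mxE => ->; rewrite mulr0.
Qed.

Lemma nn_fact_rank n (A : 'M[R]_n) k : nn_fact A k -> (\rank A <= k)%N.
Proof.
by move=> [U [V [_ _ ->]]]; rewrite (leq_trans (mxrankM_maxl _ _)) ?rank_leq_col.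
Qed.

Lemma snt_fact_rank n (A : 'M[R]_n) k : snt_fact A k -> (\rank A <= k)%N.
Proof.
move=> [B [C [_ _ _ ->]]].
by rewrite (leq_trans (mxrankM_maxl _ _)) // (leq_trans (mxrankM_maxl _ _)) ?rank_leq_col.
Qed.

End NonnegMatrices.

Section ConcreteMatrices.
Variable R : realType.

Definition alt_row : 'rV[R]_3 := \row_j [:: 1; -1; 1]`_j.

Lemma avec_alt : (avec R)^T = alt_row *m A1 R.
Proof.
apply/matrixP => i j; rewrite !mxE sum_ord3 !mxE.
by case: i => [[|i] Hi] //; case: j => [[|[|[|j]]] Hj] //=; ring.
Qed.

(* The adjugate of A1; A1 has determinant -3 and is invertible. *)
Definition A1adj : 'M[R]_3 :=
  \matrix_(i < 3, j < 3) (nth [::] [:: [:: -1; 2; 1]; [:: 2; -4; 1]; [:: 1; 1; -1]] i)`_j.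

Lemma A1_adj : A1 R *m A1adj = 3%:M.
Proof.
apply/matrixP => i j; rewrite !mxE sum_ord3 !mxE.
by case: i => [[|[|[|i]]] Hi] //; case: j => [[|[|[|j]]] Hj] //=; ring.
Qed.

Lemma A1_unit : A1 R \in unitmx.
Proof.
have : A1 R *m ((3 : R)^-1 *: A1adj) = 1%:M.
  by rewrite -scalemxAr A1_adj scale_scalar_mx mulVf // pnatr_eq0.
by case/mulmx1_unit.
Qed.

Lemma A1_sym : (A1 R)^T = A1 R.
Proof.
apply/matrixP => i j; rewrite !mxE.
by case: i => [[|[|[|i]]] Hi] //; case: j => [[|[|[|j]]] Hj].
Qed.

Definition M4 : 'M[R]_(3 + 1) := block_mx (A1 R) (avec R) (avec R)^T 1%:M.

Definition U1 : 'M[R]_3 :=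
  \matrix_(i < 3, j < 3) (nth [::] [:: [:: 0; 2; 1]; [:: 1; 1; 0]; [:: 1; 0; 1]] i)`_j.
Definition u2 : 'rV[R]_3 := \row_j [:: 0; 1; 2]`_j.
Definition W1 : 'M[R]_3 :=
  \matrix_(i < 3, j < 3) (nth [::] [:: [:: 1; 0; 1]; [:: 0; 0; 1]; [:: 0; 1; 0]] i)`_j.
Definition w2 : 'rV[R]_3 := \row_j [:: 1; 1; 0]`_j.
Definition U4 : 'M[R]_(3 + 1, 3) := col_mx U1 u2.
Definition W4 : 'M[R]_(3 + 1, 3) := col_mx W1 w2.

Lemma M4_UW : M4 = U4 *m W4^T.
Proof.
rewrite /U4 /W4 tr_col_mx mul_col_row /M4; congr block_mx;
  apply/matrixP => i j; rewrite !mxE sum_ord3 !mxE.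
- by case: i => [[|[|[|i]]] Hi] //; case: j => [[|[|[|j]]] Hj] //=; ring.
- by case: i => [[|[|[|i]]] Hi] //; case: j => [[|j] Hj] //=; ring.
- by case: i => [[|i] Hi] //; case: j => [[|[|[|j]]] Hj] //=; ring.
- by case: i => [[|i] Hi] //; case: j => [[|j] Hj] //=; ring.
Qed.

Lemma U4_nonneg : nonneg_mx U4.
Proof.
move=> i j; rewrite /U4 mxE; case: split => a; rewrite !mxE.
  by case: a => [[|[|[|a]]] Ha] //; case: j => [[|[|[|j]]] Hj] //=; rewrite ?ler01 ?lexx ?ler0n.
by case: j => [[|[|[|j]]] Hj] //=; rewrite ?ler01 ?lexx ?ler0n.
Qed.

Lemma W4_nonneg : nonneg_mx W4.
Proof.
move=> i j; rewrite /W4 mxE; case: split => a; rewrite !mxE.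
  by case: a => [[|[|[|a]]] Ha] //; case: j => [[|[|[|j]]] Hj] //=; rewrite ?ler01 ?lexx ?ler0n.
by case: j => [[|[|[|j]]] Hj] //=; rewrite ?ler01 ?lexx ?ler0n.
Qed.

Lemma M4_nonneg : nonneg_mx M4.
Proof.
by rewrite M4_UW; apply: nonneg_mulmx (nonneg_tr _); [exact: U4_nonneg|exact: W4_nonneg].
Qed.

Lemma M4_sym : M4^T = M4.
Proof. by rewrite /M4 tr_block_mx A1_sym trmxK trmx1. Qed.

End ConcreteMatrices.

Lemma A1_alt_infeasible (R : realType) (B1 C : 'M[R]_3) :
  nonneg_mx B1 -> nonneg_mx C -> C^T = C -> B1 *m C *m B1^T = A1 R ->
  nonneg_mx (alt_row R *m B1) -> False.
Proof.
move=> nnB nnC C_sym eA1 nn_alt.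
have C_unit : C \in unitmx.
  by move: (A1_unit R); rewrite -eA1 !unitmx_mul => /andP[/andP[]].
have gram r s : qform C (row r B1) (row s B1) = A1 R r s by rewrite -mulmx_qform eA1.
have nn_row r : nonneg_mx (row r B1) by move=> ? a; rewrite mxE.
apply: (@isotropic_pair_infeasible _ C (row i1 B1) (row i2 B1) nnC _ _ C_unit
          _ _ _ (row i0 B1)); rewrite ?gram ?mxE //=; try exact: nn_row.
by move=> a; move: (nn_alt 0 a); rewrite !mxE sum_ord3 !mxE /=; lra.
Qed.

Lemma mulmx_col_sym (R : pzRingType) m1 m2 n (B1 : 'M[R]_(m1, n)) (B2 : 'M[R]_(m2, n))
    (C : 'M[R]_n) :
  col_mx B1 B2 *m C *m (col_mx B1 B2)^T =
  block_mx (B1 *m C *m B1^T) (B1 *m C *m B2^T) (B2 *m C *m B1^T) (B2 *m C *m B2^T).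
Proof. by rewrite mul_col_mx tr_col_mx mul_col_row. Qed.

Section Av.
Variables (R : realType) (k : nat) (v : 'cV[R]_k).

Definition embed : 'M[R]_(3 + k, 3 + 1) := block_mx 1%:M 0 0 v.

Lemma Av_embed : Av v = embed *m M4 R *m embed^T.
Proof.
rewrite /embed /M4 tr_block_mx !mulmx_block trmx1 !trmx0.
by rewrite !(mul1mx, mul0mx, mulmx1, mulmx0, addr0, add0r, mulmxA).
Qed.

Lemma Av_snt3_blocks (B : 'M[R]_(3 + k, 3)) (C : 'M[R]_3) :
  Av v = B *m C *m B^T ->
  usubmx B *m C *m (usubmx B)^T = A1 R /\ dsubmx B = v *m (alt_row R *m usubmx B).
Proof.
rewrite -[B](vsubmxK B) mulmx_col_sym col_mxKu col_mxKd.
set B1 := usubmx B; set Bd := dsubmx B.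
move=> /eq_block_mx[eA1 _ eva _]; split=> //.
have M_unit : C *m B1^T \in unitmx.
  by move: (A1_unit R); rewrite eA1 -mulmxA unitmx_mul => /andP[].
apply: (can_inj (mulmxK M_unit)) => /=.
by rewrite [LHS]mulmxA -eva avec_alt eA1 !mulmxA.
Qed.

Hypothesis nnv : nonneg_mx v.

Lemma embed_nonneg : nonneg_mx embed.
Proof. by apply: nonneg_block => //; [exact: nonneg_id|exact: nonneg_0|exact: nonneg_0]. Qed.

Lemma Av_snt4 : snt_fact (Av v) 4.
Proof.
exists embed, (M4 R); split; [exact: embed_nonneg|exact: M4_nonneg|exact: M4_sym|].
exact: Av_embed.
Qed.

Lemma Av_nn3 : nn_fact (Av v) 3.
Proof.
exists (embed *m U4 R), (embed *m W4 R).
split; try (apply: nonneg_mulmx; [exact: embed_nonneg|exact: U4_nonneg || exact: W4_nonneg]).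
by rewrite Av_embed M4_UW trmx_mul !mulmxA.
Qed.

(* A1 is a principal block of A(v); being invertible, it gives rank A(v) >= 3. *)
Lemma rank_Av : \rank (Av v) = 3%N.
Proof.
apply/eqP; rewrite eqn_leq (nn_fact_rank Av_nn3) /=.
have A1_sub : A1 R = row_mx 1%:M 0 *m Av v *m (row_mx 1%:M 0)^T.
  rewrite /Av mul_row_block tr_row_mx mul_row_col trmx1 trmx0.
  by rewrite !(mul1mx, mul0mx, mulmx1, mulmx0, addr0, add0r).
rewrite -{1}(mxrank_unit (A1_unit R)) A1_sub.
by rewrite (leq_trans (mxrankM_maxl _ _)) // mxrankM_maxr.
Qed.

(* A(v) has no SNT factorization through 3 columns: a positive entry v_j turns
   the nonnegative bottom row j of B into a multiple of (1, -1, 1) B1. *)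
Lemma Av_no_snt3 : v^T *m v = 1%:M -> ~ snt_fact (Av v) 3.
Proof.
move=> vv1 [B [C [nnB nnC C_sym eAv]]].
have [j vj_gt0] := unit_col_pos nnv vv1.
have [eA1 e_bottom] := Av_snt3_blocks eAv.
apply: (A1_alt_infeasible (nonneg_usubmx nnB) nnC C_sym eA1) => i a.
have := nonneg_dsubmx nnB j a.
by rewrite e_bottom mxE big_ord1 (ord1 i) pmulr_rge0.
Qed.

End Av.

Theorem mainTheorem8 (R : realType) (k : nat) (v : 'cV[R]_k) :
  (1 <= k)%N -> nonneg_mx v -> v^T *m v = 1%:M ->
  [/\ \rank (Av v) = 3%N, rk_plus_is (Av v) 3 & st_plus_is (Av v) 4].
Proof.
move=> _ nnv vv1; have rank3 := rank_Av nnv.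
split=> //.
- split; first exact: Av_nn3.
  by move=> k' /nn_fact_rank; rewrite rank3.
- split; first exact: Av_snt4.
  move=> k' snt; have := snt_fact_rank snt.
  rewrite rank3 leq_eqVlt => /orP[/eqP k'_eq3|//].
  by subst k'; case: (Av_no_snt3 nnv vv1 snt).
Qed.
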